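(* In the synchronous authenticated setting with $n$ parties of which at most $t<n/2$ are Byzantine, in the protocol ''Synchronous Crypto. $\frac{n}{2}$-BA'' described in the context, all honest parties output the same message.
   Context: Model: $n$ parties connected pairwise by reliable authenticated channels; a static, PPT (in security parameter $k$) adversary corrupts up to $t$ parties, which behave arbitrarily; others honest. Synchronous (known delay bound). Trusted setup: PKI and accumulator key $ak$. The claim holds except with probability negligible in $k$. A $j$-bit BA oracle is a subprotocol in which each party inputs a $j$-bit value and which guarantees: every honest party outputs; all honest parties output the same value; if all honest inputs equal $v$, the output is $v$. Reed–Solomon code: $\texttt{ENC}$ maps $b$ data symbols to $n$ codeword symbols, any $b$ of which determine the data; $\texttt{DEC}$ corrects $c$ errors and $d$ erasures whenever $n-b\ge 2c+d$. Accumulator: deterministic $\texttt{Eval}(ak,\mathcal{D})$ gives accumulation value $z$; $\texttt{CreateWit}(ak,z,d)$ gives a witness for $d\in\mathcal{D}$; $\texttt{Verify}(ak,z,w,d)$ accepts honestly generated witnesses; collision-free: a PPT adversary cannot find $\mathcal{D}$, $d'\notin\mathcal{D}$ and $w'$ with $\texttt{Verify}(ak,\texttt{Eval}(ak,\mathcal{D}),w',d')$ true except with negligible probability. Subroutines (with $b=n-t$): $\texttt{Encode}(m,b)$ splits $m$ into $b$ equal blocks, computes $(s_1,\dots,s_n)=\texttt{ENC}(\text{blocks})$, returns $((1,s_1),\dots,(n,s_n))$. $\texttt{Distribute}(\mathcal{D},ak,z)$: send $(s_j,\texttt{CreateWit}(ak,z,(j,s_j)))$ to each $P_j$. $\texttt{Reconstruct}(\mathcal{S},ak,z,d_0)$: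 erase every $s_j$ whose witness fails $\texttt{Verify}(ak,z,w_j,(j,s_j))$ (or is missing), apply $\texttt{DEC}$ with $c=0,d=d_0$, return concatenated blocks. Protocol for $P_i$ with input $m_i$: (1) $\mathcal{D}_i=\texttt{Encode}(m_i,b)$, $z_i=\texttt{Eval}(ak,\mathcal{D}_i)$; input $z_i$ to a $k$-bit BA oracle. (2) On output $z$, $happy_i=1$ iff $z=z_i$; input $happy_i$ to a 1-bit BA oracle. (3) If it outputs $0$, output $\bot$ and abort; if $1$ and $happy_i=1$, invoke $\texttt{Distribute}(\mathcal{D}_i,ak,z)$. (4) If some received pair $(s_i,w_i)$ satisfies $\texttt{Verify}(ak,z,w_i,(i,s_i))$, send it to all parties. (5) If $happy_i=1$ set $o_i=m_i$, else $o_i=\texttt{Reconstruct}(\mathcal{S}_i,ak,z,t)$ where $\mathcal{S}_i$ consists of the pairs received from each $P_j$ in step 4. (6) Output $o_i$. *)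

From mathcomp Require Import all_boot.
Set Implicit Arguments. Unset Strict Implicit. Unset Printing Implicit Defensive.

Section Protocol.
(* n parties 'I_n, corruption bound t, code dimension b = n - t *)
Variables (n t : nat).
Local Notation b := (n - t).
(* Msg: messages; Sym: code symbols (= blocks); Z: accumulation values (k-bit);
   AK: accumulator keys; W: witnesses *)
Variables (Msg : Type) (Sym Z : eqType) (AK W : Type).
Variables (split : Msg -> b.-tuple Sym) (concat : b.-tuple Sym -> Msg).
(* the (Reed-Solomon) code: ENC maps b data symbols to n codeword symbols;
   DEC r c d : decode received word r (None = erasure) with parameters c, d *)
Variables (ENC : b.-tuple Sym -> 'I_n -> Sym)
          (DEC : ('I_n -> option Sym) -> nat -> nat -> b.-tuple Sym).
Variables (AccEval : AK -> seq ('I_n * Sym) -> Z)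
          (CreateWit : AK -> Z -> 'I_n * Sym -> W)
          (Verify : AK -> Z -> W -> 'I_n * Sym -> bool).

Definition decodes_correctly : Prop :=
  forall (x : b.-tuple Sym) (r : 'I_n -> option Sym) (c d : nat),
    2 * c + d <= n - b ->
    #|[set j | r j == None]| <= d ->
    #|[set j | (r j != None) && (r j != Some (ENC x j))]| <= c ->
    DEC r c d = x.

Definition acc_correct : Prop :=
  forall (ak : AK) (D : seq ('I_n * Sym)) (d : 'I_n * Sym),
    d \in D -> Verify ak (AccEval ak D) (CreateWit ak (AccEval ak D) d) d.

Definition Encode (m : Msg) : seq ('I_n * Sym) :=
  [seq (j, ENC (split m) j) | j <- enum 'I_n].

Definition ba_valid (C : {set 'I_n}) (T : eqType) (inp : 'I_n -> T) (out : T) : Prop :=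
  forall v, (forall i, i \notin C -> inp i = v) -> out = v.

(* ---- one execution ----
   ak : accumulator key; C : corrupted parties; m : inputs;
   zout : output of the k-bit BA oracle; hout : output of the 1-bit BA oracle;
   adv3 i j / adv4 i j : what corrupted party i sends to j in step 3 / 4;
   sel4 j : the verifying pair (if any) honest party j forwards in step 4. *)
Variables (ak : AK) (C : {set 'I_n}) (m : 'I_n -> Msg) (zout : Z) (hout : bool)
          (adv3 adv4 : 'I_n -> 'I_n -> option (Sym * W))
          (sel4 : 'I_n -> option (Sym * W)).

Definition D_of (i : 'I_n) : seq ('I_n * Sym) := Encode (m i).
Definition z_of (i : 'I_n) : Z := AccEval ak (D_of i).
Definition happy (i : 'I_n) : bool := zout == z_of i.

Definition recv3 (i j : 'I_n) : option (Sym * W) :=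
  if i \in C then adv3 i j
  else if hout && happy i then
         Some (ENC (split (m i)) j, CreateWit ak zout (j, ENC (split (m i)) j))
       else None.

Definition sel4_ok : Prop :=
  forall j, j \notin C ->
    (forall p, sel4 j = Some p ->
       (exists i, recv3 i j = Some p) /\ Verify ak zout p.2 (j, p.1)) /\
    ((exists i p, recv3 i j = Some p /\ Verify ak zout p.2 (j, p.1)) ->
       sel4 j <> None).

(* the pair received by i from j in step 4 *)
Definition recv4 (j i : 'I_n) : option (Sym * W) :=
  if j \in C then adv4 j i else sel4 j.

Definition reconstruct (i : 'I_n) : Msg :=
  concat (DEC (fun j => match recv4 j i with
                        | Some (s, w) => if Verify ak zout w (j, s) then Some s else None
                        | None => None
                        end) 0 t).

(* output of party i; None stands for bottom *)
Definition output (i : 'I_n) : option Msg :=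
  if ~~ hout then None
  else if happy i then Some (m i)
  else Some (reconstruct i).

Definition collision_found : Prop :=
  exists i, [/\ i \notin C, happy i &
    exists snd rcv p,
      (recv3 snd rcv = Some p /\ Verify ak zout p.2 (rcv, p.1) /\ (rcv, p.1) \notin D_of i)
   \/ (recv4 snd rcv = Some p /\ Verify ak zout p.2 (snd, p.1) /\ (snd, p.1) \notin D_of i)].

End Protocol.

From Pilot Require Import Defs.
From mathcomp Require Import all_boot.
From Stdlib Require Import Classical.

(* Unless the adversary exhibits an accumulator collision, every pair that
   verifies against the agreed value z is a genuine codeword symbol of the
   message of any honest party whose own accumulation value is z.  The 1-bit
   BA outputs 1 only if some honest party P_i is happy, so all happy honest
   parties hold the message m_i (their codewords coincide symbol by symbol),
   and every unhappy honest party decodes from a word whose only defects are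
   erasures, at most t of them since every honest P_j forwards a verifying
   s_j; decoding with c = 0 and d = t therefore returns m_i as well. *)

Set Implicit Arguments. Unset Strict Implicit. Unset Printing Implicit Defensive.

Section Coding.

Variables (n t : nat) (Msg : Type) (Sym : eqType).
Variables (split : Msg -> (n - t).-tuple Sym) (ENC : (n - t).-tuple Sym -> 'I_n -> Sym).

Lemma mem_Encode mm j s : ((j, s) \in Encode split ENC mm) = (s == ENC (split mm) j).
Proof.
apply/mapP/eqP => [[k _ [-> ->]] // | ->].
by exists j; rewrite ?mem_enum.
Qed.

Variable DEC : ('I_n -> option Sym) -> nat -> nat -> (n - t).-tuple Sym.
Hypothesis decodesP : decodes_correctly ENC DEC.

Lemma DEC_codeword x r : (forall j, r j = Some (ENC x j)) -> DEC r 0 0 = x.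
Proof.
move=> rE; apply: decodesP => //; rewrite leqn0 cards_eq0; apply/eqP/setP => j.
  by rewrite !inE rE.
by rewrite !inE rE eqxx andbF.
Qed.

Lemma ENC_inj x y : ENC x =1 ENC y -> x = y.
Proof.
move=> eq_xy; rewrite -[x](@DEC_codeword x (fun j => Some (ENC x j))) //.
by apply: DEC_codeword => j; rewrite eq_xy.
Qed.

End Coding.

Section Execution.

Variables (n t : nat) (Msg : Type) (Sym Z : eqType) (AK W : Type).
Variables (split : Msg -> (n - t).-tuple Sym) (concat : (n - t).-tuple Sym -> Msg)
  (ENC : (n - t).-tuple Sym -> 'I_n -> Sym)
  (DEC : ('I_n -> option Sym) -> nat -> nat -> (n - t).-tuple Sym)
  (AccEval : AK -> seq ('I_n * Sym) -> Z)
  (CreateWit : AK -> Z -> 'I_n * Sym -> W)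
  (Verify : AK -> Z -> W -> 'I_n * Sym -> bool).
Hypotheses (splitK : cancel split concat) (decodesP : decodes_correctly ENC DEC)
  (acc_correctP : acc_correct AccEval CreateWit Verify).

Variables (ak : AK) (C : {set 'I_n}) (m : 'I_n -> Msg) (zout : Z) (hout : bool)
  (adv3 adv4 : 'I_n -> 'I_n -> option (Sym * W)) (sel4 : 'I_n -> option (Sym * W)).
Hypotheses (t_le_n : t <= n) (card_C : #|C| <= t)
  (hout_valid : ba_valid C (happy split ENC AccEval ak m zout) hout)
  (sel4P : sel4_ok split ENC AccEval CreateWit Verify ak C m zout hout adv3 sel4)
  (no_collision : ~ collision_found split ENC AccEval CreateWit Verify
                      ak C m zout hout adv3 adv4 sel4).

Local Notation happy := (happy split ENC AccEval ak m zout).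
Local Notation symbol i j := (ENC (split (m i)) j).
Local Notation witness i j := (CreateWit ak zout (j, symbol i j)).
Local Notation recv3 := (recv3 split ENC AccEval CreateWit ak C m zout hout adv3).
Local Notation recv4 := (recv4 C adv4 sel4).
Local Notation reconstruct := (reconstruct concat DEC Verify ak C zout adv4 sel4).
Local Notation output := (output split concat ENC DEC AccEval Verify ak C m zout hout adv4 sel4).

Definition verified_word (k j : 'I_n) : option Sym :=
  match recv4 j k with
  | Some (s, w) => if Verify ak zout w (j, s) then Some s else None
  | None => None
  end.

Lemma witness_verifies i j : happy i -> Verify ak zout (witness i j) (j, symbol i j).
Proof. by move/eqP->; apply: acc_correctP; rewrite mem_Encode. Qed.

Lemma verified_recv3 i snd rcv p : i \notin C -> happy i ->
  recv3 snd rcv = Some p -> Verify ak zout p.2 (rcv, p.1) -> p.1 = symbol i rcv.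
Proof.
move=> iC hi r3 v; apply/eqP; rewrite -(mem_Encode split); apply/negPn/negP => p_new.
by apply: no_collision; exists i; split => //; exists snd, rcv, p; left.
Qed.

Lemma verified_recv4 i snd rcv p : i \notin C -> happy i ->
  recv4 snd rcv = Some p -> Verify ak zout p.2 (snd, p.1) -> p.1 = symbol i snd.
Proof.
move=> iC hi r4 v; apply/eqP; rewrite -(mem_Encode split); apply/negPn/negP => p_new.
by apply: no_collision; exists i; split => //; exists snd, rcv, p; right.
Qed.

Section Accepted.

Hypothesis hout_true : hout.

Lemma exists_happy_honest : exists2 i, i \notin C & happy i.
Proof.
apply/exists_inP; apply: contraLR hout_true => /exists_inPn none_happy.
by apply/negbT/hout_valid => i /none_happy/negbTE.
Qed.

Variable i : 'I_n.
Hypotheses (iC : i \notin C) (hi : happy i).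

Lemma recv3_honest_happy k j : k \notin C -> happy k ->
  recv3 k j = Some (symbol k j, witness k j).
Proof. by move=> kC hk; rewrite /Defs.recv3 (negbTE kC) hout_true hk. Qed.

Lemma happy_honest_input k : k \notin C -> happy k -> m k = m i.
Proof.
move=> kC hk; rewrite -[m k]splitK -[m i]splitK; congr concat.
apply: (ENC_inj decodesP) => j.
exact: verified_recv3 (recv3_honest_happy j kC hk) (witness_verifies j hk).
Qed.

Lemma verified_word_honest k j : j \notin C -> verified_word k j = Some (symbol i j).
Proof.
move=> jC; have [sel4_sound sel4_complete] := sel4P jC.
rewrite /verified_word /Defs.recv4 (negbTE jC).
case e: (sel4 j) => [[s w]|]; last first.
  case: (sel4_complete _ e); exists i, (symbol i j, witness i j).
  by rewrite recv3_honest_happy ?witness_verifies.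
have [[snd r3] /= v] := sel4_sound _ e.
by rewrite v (verified_recv3 iC hi r3 v : s = _).
Qed.

Lemma verified_word_sound k j s : verified_word k j = Some s -> s = symbol i j.
Proof.
rewrite /verified_word; case e: (recv4 j k) => [[s' w]|] //.
case v: (Verify ak zout w (j, s')) => // -[<-].
exact: (verified_recv4 iC hi e v).
Qed.

Lemma reconstruct_happy_input k : reconstruct k = m i.
Proof.
rewrite /Defs.reconstruct -/(verified_word k) -[m i]splitK; congr concat; apply: decodesP.
- by rewrite muln0 add0n subKn.
- apply: leq_trans card_C; apply: subset_leq_card; apply/subsetP => j.
  by rewrite inE; apply: contraLR => /(verified_word_honest k) ->.
- rewrite leqn0 cards_eq0; apply/eqP/setP => j; rewrite !inE.
  by case e: (verified_word k j) => [s|] //=; rewrite (verified_word_sound e) eqxx.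
Qed.

Lemma output_honest k : k \notin C -> output k = Some (m i).
Proof.
move=> kC; rewrite /Defs.output hout_true /=.
case: ifP => [hk | _]; first by rewrite (happy_honest_input kC hk).
by rewrite reconstruct_happy_input.
Qed.

End Accepted.

Lemma honest_outputs_agree i j : i \notin C -> j \notin C -> output i = output j.
Proof.
move=> iC jC; have [hout_true | hout_false] := orP (orbN hout).
  have [k kC hk] := exists_happy_honest hout_true.
  by rewrite !(output_honest hout_true kC hk).
by rewrite /Defs.output hout_false.
Qed.

End Execution.

Theorem mainTheorem3 (n t : nat) (Msg : Type) (Sym Z : eqType) (AK W : Type)
  (split : Msg -> (n - t).-tuple Sym) (concat : (n - t).-tuple Sym -> Msg)
  (ENC : (n - t).-tuple Sym -> 'I_n -> Sym)
  (DEC : ('I_n -> option Sym) -> nat -> nat -> (n - t).-tuple Sym)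
  (AccEval : AK -> seq ('I_n * Sym) -> Z)
  (CreateWit : AK -> Z -> 'I_n * Sym -> W)
  (Verify : AK -> Z -> W -> 'I_n * Sym -> bool) :
  2 * t < n ->
  cancel split concat ->
  decodes_correctly ENC DEC ->
  acc_correct AccEval CreateWit Verify ->
  forall (ak : AK) (C : {set 'I_n}) (m : 'I_n -> Msg) (zout : Z) (hout : bool)
         (adv3 adv4 : 'I_n -> 'I_n -> option (Sym * W))
         (sel4 : 'I_n -> option (Sym * W)),
    #|C| <= t ->
    ba_valid C (z_of split ENC AccEval ak m) zout ->
    ba_valid C (happy split ENC AccEval ak m zout) hout ->
    sel4_ok split ENC AccEval CreateWit Verify ak C m zout hout adv3 sel4 ->
    (forall i j, i \notin C -> j \notin C ->
       output split concat ENC DEC AccEval Verify ak C m zout hout adv4 sel4 i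
       = output split concat ENC DEC AccEval Verify ak C m zout hout adv4 sel4 j)
    \/ collision_found split ENC AccEval CreateWit Verify ak C m zout hout adv3 adv4 sel4.
Proof.
move=> two_t_lt_n splitK decodesP acc_correctP ak C m zout hout adv3 adv4 sel4
  card_C _ hout_valid sel4P.
have t_le_n : t <= n by rewrite (leq_trans _ (ltnW two_t_lt_n)) // leq_pmull.
have [collision | no_collision] :=
  classic (collision_found split ENC AccEval CreateWit Verify ak C m zout hout adv3 adv4 sel4).
  by right.
left; exact: (honest_outputs_agree splitK decodesP acc_correctP
  t_le_n card_C hout_valid sel4P no_collision).
Qed.
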